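(* Let $A$ be an Artin algebra and $\mathcal C,\mathcal D$ subcategories of $A\text{-mod}$. Then $$\max\{\operatorname{ed}\mathcal C,\operatorname{ed}\mathcal D\}\le\operatorname{ed}(\mathcal C\bullet\mathcal D)\le\operatorname{ed}\mathcal C+\operatorname{ed}\mathcal D+1.$$
   Context: Subcategories are full, additive and closed under isomorphisms. For subcategories $\mathcal T_1,\mathcal T_2$, $\mathcal T_1\bullet\mathcal T_2:=\operatorname{add}\{X\mid\exists$ exact $0\to T_1\to X\to T_2\to0$, $T_i\in\mathcal T_i\}$, where $\operatorname{add}$ denotes closure under finite direct sums and direct summands. For a module $T$: $[T]_0=\{0\}$, $[T]_1=\operatorname{add}(T)$, $[T]_n=[T]_1\bullet[T]_{n-1}$. $\operatorname{ed}\mathcal C=\inf\{n\ge0\mid\mathcal C\subseteq[T]_{n+1}$ for some $T\in A\text{-mod}\}$. *)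

From HB Require Import structures.
From mathcomp Require Import all_boot all_order all_algebra.
From mathcomp Require Import boolp.
Set Implicit Arguments. Unset Strict Implicit. Unset Printing Implicit Defensive.
Import GRing.Theory.
Local Open Scope ring_scope.

Definition is_ideal (R : comPzRingType) (I : R -> Prop) : Prop :=
  I 0 /\ (forall x y, I x -> I y -> I (x + y)) /\ (forall r x, I x -> I (r * x)).

Definition artinian (R : comPzRingType) : Prop :=
  forall I : nat -> R -> Prop, (forall n, is_ideal (I n)) ->
    (forall n x, I n.+1 x -> I n x) ->
    exists N, forall n, (N <= n)%N -> forall x, I n x <-> I N x.

(** A is an Artin algebra: there is a commutative artinian ring R and a ring
    morphism R -> Z(A) making A a finitely generated R-module. *)
Definition artin_algebra (A : pzRingType) : Prop :=
  exists (R : comPzRingType) (phi : {rmorphism R -> A}),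
    artinian R /\ (forall r a, phi r * a = a * phi r) /\
    exists s : seq A, forall a : A,
      exists c : 'I_(size s) -> R, a = \sum_(i < size s) phi (c i) * s`_i.

Section Modules.
Variable A : pzRingType.

Definition is_lin (M N : lmodType A) (f : M -> N) : Prop :=
  forall (a : A) (x y : M), f (a *: x + y) = a *: f x + f y.

(** finitely generated left A-modules: the objects of A-mod *)
Definition fg (M : lmodType A) : Prop :=
  exists s : seq M, forall m : M,
    exists c : 'I_(size s) -> A, m = \sum_(i < size s) c i *: s`_i.

Definition iso (M N : lmodType A) : Prop :=
  exists f : M -> N, is_lin f /\ bijective f.

Definition is_zero (M : lmodType A) : Prop := forall x : M, x = 0.

(** add S : closure under isomorphisms, finite direct sums (including the
    empty sum 0) and direct summands. *)
Inductive addc (S : lmodType A -> Prop) : lmodType A -> Prop :=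
| addc_zero (X : lmodType A) : is_zero X -> addc S X
| addc_in (X Y : lmodType A) : S Y -> iso Y X -> addc S X
| addc_sum (X Y Z : lmodType A) : addc S Y -> addc S Z -> iso (Y * Z)%type X -> addc S X
| addc_summand (X Y Z : lmodType A) : addc S Y -> iso (X * Z)%type Y -> addc S X.

Definition short_exact (T1 X T2 : lmodType A) (f : T1 -> X) (g : X -> T2) : Prop :=
  is_lin f /\ is_lin g /\ injective f /\ (forall z, exists x, g x = z) /\
  (forall x, g x = 0 <-> exists t, f t = x).

Definition bullet (T1 T2 : lmodType A -> Prop) : lmodType A -> Prop :=
  addc (fun X => exists (Y1 Y2 : lmodType A) (f : Y1 -> X) (g : X -> Y2),
           T1 Y1 /\ T2 Y2 /\ short_exact f g).

Fixpoint layer (T : lmodType A) (n : nat) : lmodType A -> Prop :=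
  match n with
  | 0 => is_zero
  | 1 => addc (fun X => X = T)
  | n'.+1 => bullet (addc (fun X => X = T)) (layer T n')
  end.

(** subcategory of A-mod: full (automatic), contained in A-mod, additive and
    closed under isomorphisms, i.e. equal to its add-closure. *)
Definition subcat (C : lmodType A -> Prop) : Prop :=
  (forall X, C X -> fg X) /\ (forall X, addc C X -> C X).

Definition ed_le (C : lmodType A -> Prop) (n : nat) : Prop :=
  exists T : lmodType A, fg T /\ forall X, C X -> layer T n.+1 X.

(** extension dimension, valued in nat ∪ {∞} (None = ∞) *)
Definition ed (C : lmodType A -> Prop) : option nat :=
  match pselect (exists n, ed_le C n) with
  | left h => Some (@ex_minn (fun n => `[< ed_le C n >])
                     (let: ex_intro n hn := h in ex_intro _ n (asboolT hn)))
  | right _ => None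
  end.
End Modules.

Definition ole (x y : option nat) : Prop :=
  match x, y with
  | _, None => True
  | None, Some _ => False
  | Some a, Some b => (a <= b)%N
  end.
Definition oadd (x y : option nat) : option nat :=
  match x, y with Some a, Some b => Some (a + b)%N | _, _ => None end.
Definition omax (x y : option nat) : option nat :=
  match x, y with Some a, Some b => Some (maxn a b) | _, _ => None end.

(* Zero lies in every subcategory, so C and D embed into C • D and ed is
   monotone; this gives the lower bound.  For the upper bound, if
   C ⊆ [T1]_(m+1) and D ⊆ [T2]_(n+1), then with T = T1 ⊕ T2 we get
   C • D ⊆ [T]_(m+1) • [T]_(n+1) ⊆ [T]_(m+n+2).  The last inclusion is the
   associativity (X • Y) • Z ⊆ X • (Y • Z) for add-closed X and Y, whose core
   is the third isomorphism theorem: from 0 → U → M → V → 0 and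
   0 → M → E → N → 0 one gets 0 → U → E → E/U → 0 and 0 → V → E/U → N → 0.
   Direct summands are absorbed by adding a complement M' of M, which makes E
   a summand of an honest extension E ⊕ M'. *)

From HB Require Import structures.
From mathcomp Require Import all_boot all_algebra boolp.
From mathcomp Require Import generic_quotient ring_quotient.
Set Implicit Arguments. Unset Strict Implicit. Unset Printing Implicit Defensive.
Import GRing.Theory.
Local Open Scope ring_scope.
Local Open Scope quotient_scope.

Section LinearMaps.
Variables (A : pzRingType) (M N : lmodType A) (f : M -> N).
Hypothesis f_lin : is_lin f.

Lemma linB x y : f (x - y) = f x - f y.
Proof. exact: (@zmod_morphism_linear _ _ _ *:%R _ f_lin). Qed.

Lemma lin0 : f 0 = 0.
Proof. by rewrite -(subrr 0) linB subrr. Qed.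

Lemma linD x y : f (x + y) = f x + f y.
Proof. by have := f_lin 1 x y; rewrite !scale1r. Qed.

Lemma linZ a x : f (a *: x) = a *: f x.
Proof. exact: (@scalable_linear _ _ _ *:%R _ f_lin). Qed.

Lemma lin_inj : (forall x, f x = 0 -> x = 0) -> injective f.
Proof. by move=> ker0 x y fxy; apply/subr0_eq/ker0; rewrite linB fxy subrr. Qed.

Lemma lin_comb (s : seq M) (c : 'I_(size s) -> A) :
  f (\sum_(i < size s) c i *: s`_i) = \sum_(i < size s) c i *: (map f s)`_i.
Proof.
rewrite (big_morph f linD lin0); apply: eq_bigr => i _.
by rewrite linZ (nth_map 0).
Qed.

End LinearMaps.

Lemma lin_comp (A : pzRingType) (M N K : lmodType A) (f : M -> N) (g : N -> K) :
  is_lin f -> is_lin g -> is_lin (g \o f).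
Proof. by move=> f_lin g_lin a x y /=; rewrite f_lin g_lin. Qed.

Section Cokernel.
Variables (A : pzRingType) (U F : lmodType A) (h : U -> F).
Hypothesis h_lin : is_lin h.

Definition image_mem : {pred F} := fun x => `[< exists u, h u = x >].

Lemma image_submod_closed : submod_closed image_mem.
Proof.
split; first by apply/asboolP; exists 0; exact: lin0 h_lin.
move=> a _ _ /asboolP[u <-] /asboolP[v <-]; apply/asboolP.
by exists (a *: u + v); apply: h_lin.
Qed.

HB.instance Definition _ := GRing.isSubmodClosed.Build A F image_mem
  (GRing.submod_closed_semi image_submod_closed).

Local Notation Q := (Quotient.quot image_mem).

Lemma pi_eq0 x : (\pi_Q x == 0) = (x \in image_mem).
Proof. by rewrite -pi_zeror -Quotient.idealrBE subr0. Qed.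

Definition qscale (a : A) : Q -> Q := lift_op1 Q ( *:%R a).

Lemma pi_scale a : {morph \pi_Q : x / a *: x >-> qscale a x}.
Proof.
move=> x; unlock qscale; apply/eqP; rewrite -Quotient.idealrBE -scalerBr.
by apply: rpredZ; rewrite Quotient.idealrBE reprK.
Qed.
Canonical pi_scale_morph a := PiMorph1 (pi_scale a).

Lemma qscaleA a b (q : Q) : qscale a (qscale b q) = qscale (a * b) q.
Proof. by rewrite -[q]reprK !piE scalerA. Qed.

Lemma qscale1 : left_id 1 qscale.
Proof. by move=> q; rewrite -[q]reprK !piE scale1r. Qed.

Lemma qscaleDr : right_distributive qscale +%R.
Proof. by move=> a p q; rewrite -[p]reprK -[q]reprK !piE scalerDr. Qed.

Lemma qscaleDl (q : Q) : {morph qscale^~ q : a b / a + b}.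
Proof. by move=> a b; rewrite -[q]reprK !piE scalerDl. Qed.

HB.instance Definition _ :=
  GRing.Zmodule_isLmodule.Build A Q qscaleA qscale1 qscaleDr qscaleDl.

Lemma cokernel_short_exact :
  injective h -> exists (C : lmodType A) (p : F -> C), short_exact h p.
Proof.
move=> h_inj; exists Q, \pi_Q; split=> //.
split; first by move=> a x y; rewrite pi_addr pi_scale.
split=> //; split=> [q|x]; first by exists (repr q); rewrite reprK.
split=> [/eqP|[u <-]]; first by rewrite pi_eq0 => /asboolP.
by apply/eqP; rewrite pi_eq0; apply/asboolP; exists u.
Qed.

End Cokernel.

Section Extensions.
Variable A : pzRingType.
Local Notation mod := (lmodType A).
Implicit Types (S : mod -> Prop) (X Y Z : mod).

Definition mod0 : mod := 'rV[A]_0.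

Lemma mod0_zero : is_zero mod0.
Proof. by move=> x; rewrite thinmx0. Qed.

Lemma iso_refl (M : mod) : iso M M.
Proof. by exists id; split => //; exists id. Qed.

Lemma iso_sym (M N : mod) : iso M N -> iso N M.
Proof.
case=> f [f_lin [g fK gK]]; exists g; split; last by exists f.
by move=> a x y; apply: (can_inj fK); rewrite gK f_lin !gK.
Qed.

Lemma iso_trans (M N K : mod) : iso M N -> iso N K -> iso M K.
Proof.
case=> f [f_lin f_bij] [g [g_lin g_bij]]; exists (g \o f).
by split; [apply: lin_comp | apply: bij_comp].
Qed.

Lemma iso_prod (Y Y' Z Z' : mod) :
  iso Y Y' -> iso Z Z' -> iso (Y * Z)%type (Y' * Z')%type.
Proof.
case=> f1 [f1_lin [g1 f1K g1K]] [f2 [f2_lin [g2 f2K g2K]]].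
exists (fun p => (f1 p.1, f2 p.2)); split.
  by move=> a [y z] [y' z'] /=; rewrite f1_lin f2_lin.
by exists (fun p => (g1 p.1, g2 p.2)) => -[y z] /=; rewrite ?f1K ?f2K ?g1K ?g2K.
Qed.

Lemma iso_prodC (Y Z : mod) : iso (Y * Z)%type (Z * Y)%type.
Proof.
by exists (fun p => (p.2, p.1)); split => //; exists (fun p => (p.2, p.1)) => -[].
Qed.

Lemma iso_prodA (X Y Z : mod) : iso ((X * Y) * Z)%type (X * (Y * Z))%type.
Proof.
exists (fun p => (p.1.1, (p.1.2, p.2))); split => //.
by exists (fun p => ((p.1, p.2.1), p.2.2)) => [[[]]|[?[]]].
Qed.

Lemma iso_prodACA (X Y Z W : mod) :
  iso ((X * Y) * (Z * W))%type ((X * Z) * (Y * W))%type.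
Proof.
exists (fun p => ((p.1.1, p.2.1), (p.1.2, p.2.2))); split => //.
by exists (fun p => ((p.1.1, p.2.1), (p.1.2, p.2.2))) => -[[? ?] [? ?]].
Qed.

Lemma iso_prod0 (Y Z : mod) : is_zero Z -> iso (Y * Z)%type Y.
Proof.
move=> Z0; exists fst; split => //.
by exists (fun y => (y, 0)) => [[y z]|y] //=; rewrite [in RHS](Z0 z).
Qed.

Lemma mem_addc S X : S X -> addc S X.
Proof. by move=> SX; apply: addc_in SX (iso_refl X). Qed.

Lemma addc_iso S X Y : addc S Y -> iso Y X -> addc S X.
Proof.
move=> SY YX; apply: (addc_sum SY (addc_zero _ mod0_zero)).
exact: iso_trans (iso_prod0 _ mod0_zero) YX.
Qed.

Lemma addc_mono (S S' : mod -> Prop) :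
  (forall X, S X -> S' X) -> forall X, addc S X -> addc S' X.
Proof.
move=> SS' X; elim => {X}.
- by move=> X X0; apply: addc_zero.
- by move=> X Y /SS' S'Y YX; apply: addc_in S'Y YX.
- by move=> X Y Z _ S'Y _ S'Z YZX; apply: addc_sum S'Y S'Z YZX.
- by move=> X Y Z _ S'Y XZY; apply: addc_summand S'Y XZY.
Qed.

Lemma addc_idem S X : addc (addc S) X -> addc S X.
Proof.
elim => {X}.
- by move=> X X0; apply: addc_zero.
- by move=> X Y SY YX; apply: addc_iso SY YX.
- by move=> X Y Z _ SY _ SZ YZX; apply: addc_sum SY SZ YZX.
- by move=> X Y Z _ SY XZY; apply: addc_summand SY XZY.
Qed.

Definition add_closed S := forall X, addc S X -> S X.

Lemma add_closed_addc S : add_closed (addc S).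
Proof. exact: addc_idem. Qed.

Lemma add_closed_zero S X : add_closed S -> is_zero X -> S X.
Proof. by move=> S_closed X0; apply/S_closed/addc_zero. Qed.

Lemma add_closed_prod S Y Z : add_closed S -> S Y -> S Z -> S (Y * Z)%type.
Proof.
move=> S_closed SY SZ; apply/S_closed.
exact: addc_sum (mem_addc SY) (mem_addc SZ) (iso_refl _).
Qed.

Definition ext (S1 S2 : mod -> Prop) : mod -> Prop :=
  fun X => exists (Y1 Y2 : mod) (f : Y1 -> X) (g : X -> Y2),
    S1 Y1 /\ S2 Y2 /\ short_exact f g.

Lemma ext_mono (S1 S2 S1' S2' : mod -> Prop) :
  (forall X, S1 X -> S1' X) -> (forall X, S2 X -> S2' X) ->
  forall X, ext S1 S2 X -> ext S1' S2' X.
Proof.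
move=> S11' S22' X [Y1 [Y2 [f [g [S1Y1 [S2Y2 fg]]]]]].
by exists Y1, Y2, f, g; split; [apply: S11' | split; [apply: S22' |]].
Qed.

Lemma bullet_mono (S1 S2 S1' S2' : mod -> Prop) :
  (forall X, S1 X -> S1' X) -> (forall X, S2 X -> S2' X) ->
  forall X, bullet S1 S2 X -> bullet S1' S2' X.
Proof. by move=> S11' S22'; apply/addc_mono/ext_mono. Qed.

Lemma short_exact_id_zero (X Z : mod) :
  is_zero Z -> short_exact (@id X) (fun _ : X => (0 : Z)).
Proof.
move=> Z0; split=> //; split; first by move=> a x y; rewrite scaler0 addr0.
split=> //; split; first by move=> z; exists 0; rewrite (Z0 z).
by move=> x; split => // _; exists x.
Qed.

Lemma short_exact_zero_id (Z X : mod) :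
  is_zero Z -> short_exact (fun _ : Z => (0 : X)) (@id X).
Proof.
move=> Z0; split; first by move=> a x y; rewrite scaler0 addr0.
split=> //; split; first by move=> x y _; rewrite (Z0 x) (Z0 y).
split; first by move=> z; exists z.
by move=> x; split => [->|[t <-]]; [exists 0 |].
Qed.

Lemma short_exact_isoL (M' M X N : mod) (f : M -> X) (g : X -> N) :
  iso M' M -> short_exact f g -> exists f' : M' -> X, short_exact f' g.
Proof.
move=> [phi [phi_lin [psi phiK psiK]]] [f_lin [g_lin [f_inj [g_surj kerg]]]].
exists (f \o phi); split; first exact: lin_comp.
split=> //; split; first exact: inj_comp f_inj (can_inj phiK).
split=> // x; rewrite kerg; split=> [[t <-]|[t <-]]; last by exists (phi t).
by exists (psi t) => /=; rewrite psiK.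
Qed.

Lemma short_exact_isoR (M X N N' : mod) (f : M -> X) (g : X -> N) :
  iso N N' -> short_exact f g -> exists g' : X -> N', short_exact f g'.
Proof.
move=> [phi [phi_lin [psi phiK psiK]]] [f_lin [g_lin [f_inj [g_surj kerg]]]].
exists (phi \o g); split=> //; split; first exact: lin_comp.
split=> //; split=> [z|x].
  by have [x gx] := g_surj (psi z); exists x => /=; rewrite gx psiK.
rewrite -kerg /=; split=> [|->]; last exact: lin0 phi_lin.
by move=> phigx0; apply: (can_inj phiK); rewrite phigx0 (lin0 phi_lin).
Qed.

Lemma short_exact_prod (X1 W1 Y1 X2 W2 Y2 : mod) (f1 : X1 -> W1) (g1 : W1 -> Y1)
    (f2 : X2 -> W2) (g2 : W2 -> Y2) :
  short_exact f1 g1 -> short_exact f2 g2 ->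
  short_exact (fun p : (X1 * X2)%type => (f1 p.1, f2 p.2) : (W1 * W2)%type)
              (fun p : (W1 * W2)%type => (g1 p.1, g2 p.2) : (Y1 * Y2)%type).
Proof.
move=> [f1_lin [g1_lin [f1_inj [g1_surj kerg1]]]].
move=> [f2_lin [g2_lin [f2_inj [g2_surj kerg2]]]].
split; first by move=> a [x1 x2] [y1 y2] /=; rewrite f1_lin f2_lin.
split; first by move=> a [x1 x2] [y1 y2] /=; rewrite g1_lin g2_lin.
split; first by move=> [x1 x2] [y1 y2] /= [/f1_inj -> /f2_inj ->].
split=> [[z1 z2]|[w1 w2]].
  have [x1 <-] := g1_surj z1; have [x2 <-] := g2_surj z2; by exists (x1, x2).
split=> [[/kerg1[t1 <-] /kerg2[t2 <-]]|[[t1 t2] [<- <-]]]; first by exists (t1, t2).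
by congr pair; [apply/kerg1; exists t1 | apply/kerg2; exists t2].
Qed.

Lemma short_exact_factor (K W V Q : mod) (f : K -> W) (g : W -> V) (phi : W -> Q) :
  short_exact f g -> is_lin phi -> (forall t, phi (f t) = 0) ->
  exists k : V -> Q, is_lin k /\ forall w, k (g w) = phi w.
Proof.
move=> [_ [g_lin [_ [g_surj kerg]]]] phi_lin phif0.
pose k v := phi (sval (cid (g_surj v))).
have kg w : k (g w) = phi w.
  rewrite /k; case: cid => w' /= gw'; apply/subr0_eq; rewrite -(linB phi_lin).
  have [t <-] : exists t, f t = w' - w.
    by apply/kerg; rewrite (linB g_lin) gw' subrr.
  exact: phif0.
exists k; split=> // a v v'.
have [w <-] := g_surj v; have [w' <-] := g_surj v'.
by rewrite -g_lin !kg phi_lin.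
Qed.

Lemma short_exact_third_iso (U W V F N : mod)
    (f1 : U -> W) (g1 : W -> V) (f2 : W -> F) (g2 : F -> N) :
  short_exact f1 g1 -> short_exact f2 g2 ->
  exists (Q : mod) (p : F -> Q) (k : V -> Q) (l : Q -> N),
    short_exact (f2 \o f1) p /\ short_exact k l.
Proof.
move=> se1 se2; have [f1_lin [g1_lin [f1_inj [g1_surj kerg1]]]] := se1.
have [f2_lin [g2_lin [f2_inj [g2_surj kerg2]]]] := se2.
have [Q [p se]] :=
  cokernel_short_exact (lin_comp f1_lin f2_lin) (inj_comp f2_inj f1_inj).
have [_ [p_lin [_ [p_surj kerp]]]] := se.
have [k [k_lin pf2]] := short_exact_factor se1 (lin_comp f2_lin p_lin)
  (fun t => (kerp _).2 (ex_intro _ t erefl)).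
have [l [l_lin pg2]] := short_exact_factor se g2_lin
  (fun u => (kerg2 _).2 (ex_intro _ (f1 u) erefl)).
exists Q, p, k, l; do 3!split=> //; split.
  apply: lin_inj k_lin _ => v; have [w <-] := g1_surj v.
  by rewrite pf2 => /kerp[u /= /f2_inj <-]; apply/kerg1; exists u.
split=> [n|q]; first by have [x <-] := g2_surj n; exists (p x).
have [x <-] := p_surj q; rewrite pg2; split.
  by move=> /kerg2[w <-]; exists (g1 w).
move=> [v]; have [w <-] := g1_surj v; rewrite pf2 -pg2 => <-.
by rewrite pg2; apply/kerg2; exists w.
Qed.

Lemma ext_prod (S1 S2 : mod -> Prop) X Y : add_closed S1 -> add_closed S2 ->
  ext S1 S2 X -> ext S1 S2 Y -> ext S1 S2 (X * Y)%type.
Proof.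
move=> S1_closed S2_closed [U1 [V1 [f1 [g1 [S1U1 [S2V1 se1]]]]]].
move=> [U2 [V2 [f2 [g2 [S1U2 [S2V2 se2]]]]]].
exists (U1 * U2)%type, (V1 * V2)%type; do 2!eexists.
split; first exact: add_closed_prod.
by split; [exact: add_closed_prod | exact: short_exact_prod se1 se2].
Qed.

Lemma addc_ext_summand (S1 S2 : mod -> Prop) X :
  add_closed S1 -> add_closed S2 -> addc (ext S1 S2) X ->
  exists X' W, ext S1 S2 W /\ iso (X * X')%type W.
Proof.
move=> S1_closed S2_closed; elim => {X}.
- move=> X X0; exists mod0, X; split; last exact: iso_prod0 mod0_zero.
  exists X, mod0, id, (fun _ => 0); split; first exact: add_closed_zero X0.
  split; first exact: add_closed_zero mod0_zero.
  exact: short_exact_id_zero mod0_zero.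
- move=> X Y extY YX; exists mod0, Y; split => //.
  exact: iso_trans (iso_prod0 _ mod0_zero) (iso_sym YX).
- move=> X Y Z _ [Y' [W1 [ext1 YW1]]] _ [Z' [W2 [ext2 ZW2]]] YZX.
  exists (Y' * Z')%type, (W1 * W2)%type; split; first exact: ext_prod.
  apply: iso_trans (iso_prod (iso_sym YZX) (iso_refl _)) _.
  exact: iso_trans (iso_prodACA _ _ _ _) (iso_prod YW1 ZW2).
- move=> X Y Z _ [Y' [W [extW YW]]] XZY; exists (Z * Y')%type, W; split => //.
  apply: iso_trans (iso_sym (iso_prodA _ _ _)) _.
  exact: iso_trans (iso_prod XZY (iso_refl _)) YW.
Qed.

Lemma ext_assoc (S1 S2 S3 : mod -> Prop) X :
  ext (ext S1 S2) S3 X -> ext S1 (ext S2 S3) X.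
Proof.
move=> [M [N [f [g [[U [V [f1 [g1 [S1U [S2V se1]]]]]] [S3N se]]]]]].
have [Q [p [k [l [seUX seVQ]]]]] := short_exact_third_iso se1 se.
by exists U, Q, (f \o f1), p; do 2!split=> //; exists V, N, k, l.
Qed.

Lemma bullet_assoc (S1 S2 S3 : mod -> Prop) X :
  add_closed S1 -> add_closed S2 ->
  bullet (bullet S1 S2) S3 X -> bullet S1 (bullet S2 S3) X.
Proof.
move=> S1_closed S2_closed BX; apply: addc_idem; move: X BX; apply: addc_mono.
move=> X [M [N [f [g [BM [S3N se]]]]]].
have [M' [W [extW MW]]] := addc_ext_summand S1_closed S2_closed BM.
have seM' := short_exact_prod se (short_exact_id_zero M' mod0_zero).
have [f' seW] := short_exact_isoL (iso_sym MW) seM'.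
have [g' seWN] := short_exact_isoR (iso_prod0 N mod0_zero) seW.
have extXM' : ext S1 (ext S2 S3) (X * M')%type.
  by apply: ext_assoc; exists W, N, f', g'.
have BXM' := mem_addc (ext_mono (fun _ => id) (@mem_addc _) extXM').
exact: addc_summand BXM' (iso_refl _).
Qed.

Lemma layer_add_closed (T : mod) n : add_closed (layer T n.+1).
Proof. by case: n => [|n] X; apply: addc_idem. Qed.

Lemma layer_sub (T T' : mod) n X :
  addc (fun Y => Y = T') T -> layer T n X -> layer T' n X.
Proof.
move=> TT'; have addTT' Y : addc (fun Y => Y = T) Y -> addc (fun Y => Y = T') Y.
  by move=> TY; apply/addc_idem/(addc_mono _ TY) => _ ->.
elim: n X => [|[|n] IH] X //; first exact: addTT'.
exact: bullet_mono.
Qed.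

Lemma bullet_layer (T : mod) a b X :
  bullet (layer T a.+1) (layer T b.+1) X -> layer T (a + b).+2 X.
Proof.
elim: a X => [|a IH] X BX //; rewrite addSn.
have := bullet_assoc (@add_closed_addc _) (@layer_add_closed T a) BX.
exact: bullet_mono.
Qed.

Lemma sum_cat (M : mod) (s t : seq M) (c : nat -> A) :
  \sum_(i < size (s ++ t)) c i *: (s ++ t)`_i =
  \sum_(i < size s) c i *: s`_i + \sum_(i < size t) c (size s + i)%N *: t`_i.
Proof.
rewrite size_cat big_split_ord /=; congr (_ + _); apply: eq_bigr => i _ /=.
  by rewrite nth_cat ltn_ord.
by rewrite nth_cat ltnNge leq_addr /= addKn.
Qed.

Lemma fg_prod (T1 T2 : mod) : fg T1 -> fg T2 -> fg (T1 * T2)%type.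
Proof.
move=> [s1 gen1] [s2 gen2].
pose inl (x : T1) : T1 * T2 := (x, 0); pose inr (y : T2) : T1 * T2 := (0, y).
exists (map inl s1 ++ map inr s2) => -[m1 m2].
have [c1 e1] := gen1 m1; have [c2 e2] := gen2 m2.
pose c n := if (n < size s1)%N then nth 0 (mktuple c1) n
            else nth 0 (mktuple c2) (n - size s1).
exists (fun i => c i); rewrite sum_cat !size_map.
have -> : (m1, m2) = inl m1 + inr m2 by congr pair; rewrite ?addr0 ?add0r.
have inl_lin : is_lin inl.
  by move=> a x y; rewrite /inl; congr pair; rewrite /= scaler0 addr0.
have inr_lin : is_lin inr.
  by move=> a x y; rewrite /inr; congr pair; rewrite /= scaler0 addr0.
rewrite e1 e2 (lin_comb inl_lin) (lin_comb inr_lin); congr (_ + _).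
all: apply: eq_bigr => i _.
  by rewrite /c ltn_ord nth_mktuple.
by rewrite /c ltnNge leq_addr /= addKn nth_mktuple.
Qed.

Lemma ed_Some_le S n : ed S = Some n -> ed_le S n.
Proof.
rewrite /ed; case: pselect => // nS [<-].
by case: ex_minnP => m /asboolP.
Qed.

Lemma ole_ed S n : ed_le S n -> ole (ed S) (Some n).
Proof.
move=> Sn; rewrite /ed; case: pselect => [nS|]; last by case; exists n.
by case: ex_minnP => m _; apply; apply/asboolP.
Qed.

Lemma ed_le_sub (S S' : mod -> Prop) n :
  (forall X, S X -> S' X) -> ed_le S' n -> ed_le S n.
Proof. by move=> SS' [T [fgT S'T]]; exists T; split=> // X /SS'; apply: S'T. Qed.

Lemma ed_mono (S S' : mod -> Prop) :
  (forall X, S X -> S' X) -> ole (ed S) (ed S').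
Proof.
move=> SS'; case ES': (ed S') => [n|]; last by case: (ed S).
exact/ole_ed/(ed_le_sub SS')/ed_Some_le.
Qed.

Lemma ed_le_bullet (S1 S2 : mod -> Prop) m n :
  ed_le S1 m -> ed_le S2 n -> ed_le (bullet S1 S2) (m + n).+1.
Proof.
move=> [T1 [fgT1 S1T1]] [T2 [fgT2 S2T2]].
exists (T1 * T2)%type; split; first exact: fg_prod.
have T1T : addc (fun Y => Y = (T1 * T2)%type) T1.
  exact: addc_summand (mem_addc erefl) (iso_refl _).
have T2T : addc (fun Y => Y = (T1 * T2)%type) T2.
  exact: addc_summand (mem_addc erefl) (iso_prodC _ _).
move=> X BX; apply: bullet_layer; apply: bullet_mono BX => Y SY.
  exact: layer_sub T1T (S1T1 _ SY).
exact: layer_sub T2T (S2T2 _ SY).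
Qed.

Lemma bullet_subl (S1 S2 : mod -> Prop) :
  S2 mod0 -> forall X, S1 X -> bullet S1 S2 X.
Proof.
move=> S2_0 X S1X; apply: mem_addc; exists X, mod0, id, (fun _ => 0).
by do 2!split=> //; exact: short_exact_id_zero mod0_zero.
Qed.

Lemma bullet_subr (S1 S2 : mod -> Prop) :
  S1 mod0 -> forall X, S2 X -> bullet S1 S2 X.
Proof.
move=> S1_0 X S2X; apply: mem_addc; exists mod0, X, (fun _ => 0), id.
by do 2!split=> //; exact: short_exact_zero_id mod0_zero.
Qed.

End Extensions.

Theorem proposition2p8 (A : pzRingType) (C D : lmodType A -> Prop) :
  artin_algebra A -> subcat C -> subcat D ->
  ole (omax (ed C) (ed D)) (ed (bullet C D)) /\
  ole (ed (bullet C D)) (oadd (oadd (ed C) (ed D)) (Some 1%N)).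
Proof.
move=> _ [_ C_closed] [_ D_closed].
have C0 : C (mod0 A) := add_closed_zero C_closed (@mod0_zero A).
have D0 : D (mod0 A) := add_closed_zero D_closed (@mod0_zero A).
split.
  have := ed_mono (@bullet_subl A C D D0).
  have := ed_mono (@bullet_subr A C D C0).
  case: (ed (bullet C D)) => [k|]; case: (ed C) => [a|]; case: (ed D) => [b|] //=.
  by rewrite geq_max => -> ->.
case EC: (ed C) => [m|]; last by case: ed.
case ED: (ed D) => [n|]; last by case: ed.
by rewrite /= addn1; apply/ole_ed/ed_le_bullet; apply: ed_Some_le.
Qed.
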